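(* Let $g$ solve system (S3) with initial data $h_{ii}>0$ satisfying $4h_{11}<h_{22}=h_{33}$. Then the solution exists for all $t\ge 0$, $g_{22}=g_{33}$ for all $t$, $g_{22}$ and $g_{33}$ are increasing, and as $t\to\infty$: $g_{00}\to0$, $g_{11}\to0$, $g_{22},g_{33}\to\infty$. Moreover $(g_{00}g_{22}^3 - 4\det h)\,g_{00}^3g_{22} = \kappa$ for all $t$, where $\kappa = (h_{00}h_{22}^3-4\det h)\,h_{00}^3h_{22}$.
   Context: Let $\det h = h_{00}h_{11}h_{22}h_{33}$, $\beta=\frac{1}{6(\det h)^2}$, and $p(x,y,z) = x^4 - x^3(y+z) + x^2yz + x(-y^3+y^2z+yz^2-z^3) + y^4 - y^3z - yz^3 + z^4$, $q(x,y,z) = 5x^4 - 3x^3(y+z) + x^2yz + x(y^3-y^2z-yz^2+z^3) - 3y^4 + 3y^3z + 3yz^3 - 3z^4$. System (S3): $\dot g_{00} = -\beta\,p(g_{11},g_{22},g_{33})\,g_{00}^3$, $\dot g_{11} = -\beta\,q(g_{11},g_{22},g_{33})\,g_{00}^2g_{11}$, $\dot g_{22} = -\beta\,q(g_{22},g_{33},g_{11})\,g_{00}^2g_{22}$, $\dot g_{33} = -\beta\,q(g_{33},g_{11},g_{22})\,g_{00}^2g_{33}$, $g_{ii}(0)=h_{ii}$. This is Bach flow on $\mathbb{R}\times\mathbb{S}^3$ in a diagonalizing left-invariant frame with $[e_i,e_j]=\sum_k\varepsilon_{ijk}e_k$; along the flow $g_{00}g_{11}g_{22}g_{33}=\det h$.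 *)

From Stdlib Require Import Reals.
Open Scope R_scope.

Definition p (x y z : R) : R :=
  x^4 - x^3*(y+z) + x^2*y*z + x*(-y^3 + y^2*z + y*z^2 - z^3)
  + y^4 - y^3*z - y*z^3 + z^4.

Definition q (x y z : R) : R :=
  5*x^4 - 3*x^3*(y+z) + x^2*y*z + x*(y^3 - y^2*z - y*z^2 + z^3)
  - 3*y^4 + 3*y^3*z + 3*y*z^3 - 3*z^4.

Definition deth (h00 h11 h22 h33 : R) : R := h00*h11*h22*h33.

Definition beta (h00 h11 h22 h33 : R) : R := 1 / (6 * (deth h00 h11 h22 h33)^2).

Definition solves_S3_on_nonneg (h00 h11 h22 h33 : R) (g0 g1 g2 g3 : R -> R) : Prop :=
  g0 0 = h00 /\ g1 0 = h11 /\ g2 0 = h22 /\ g3 0 = h33 /\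
  forall t : R, 0 <= t ->
    derivable_pt_lim g0 t
      (- beta h00 h11 h22 h33 * p (g1 t) (g2 t) (g3 t) * (g0 t)^3) /\
    derivable_pt_lim g1 t
      (- beta h00 h11 h22 h33 * q (g1 t) (g2 t) (g3 t) * (g0 t)^2 * g1 t) /\
    derivable_pt_lim g2 t
      (- beta h00 h11 h22 h33 * q (g2 t) (g3 t) (g1 t) * (g0 t)^2 * g2 t) /\
    derivable_pt_lim g3 t
      (- beta h00 h11 h22 h33 * q (g3 t) (g1 t) (g2 t) * (g0 t)^2 * g3 t).

Definition tends_to_at_infty (f : R -> R) (l : R) : Prop :=
  forall eps : R, 0 < eps -> exists T : R, forall t : R, T <= t -> Rabs (f t - l) < eps.

Definition tends_to_pinfty (f : R -> R) : Prop :=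
  forall M : R, exists T : R, forall t : R, T <= t -> M < f t.

From Coquelicot Require Import Coquelicot.
From Stdlib Require Import Reals Lra Psatz Ranalysis5.
Open Scope R_scope.

(* Along a solution, g00 g11 g22 g33 = det h, and g22 - g33 satisfies a linear
   equation with zero initial value, so g22 = g33.  Then
   kappa = (g00 g22^3 - 4 det h) g00^3 g22 is conserved as well, and kappa > 0 forces
   g22 > 4 g11, which makes g22 increasing and the ratio r = g22 / g11 increasing.  By the
   two conservation laws, r'^4 and g00^8, g11^8, g22^8 are explicit functions of r; the
   first is increasing in r, so r grows at least linearly and the limits follow.
   For existence, the orbit with the prescribed conserved quantities is parametrised by
   v in (0,1): g11 = K sqrt v sqrt (1 - v^4), g22 = g33 = 4 K sqrt v / sqrt (1 - v^4),
   g00 = det h / (g11 g22^2), with v' = (3 + v^4) (1 - v^4)^2 / (768 K^2).  In the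
   variable s = artanh v this equation has a positive bounded right-hand side, so it is
   solved for all times by inverting s |-> int ds / F(s). *)

(** * Calculus on the half-line *)

(* [auto_derive] leaves derivatives of abstract functions as [Derive f x]; these are
   replaced using the [is_derive] hypotheses in context. *)
Ltac derive_known :=
  repeat match goal with
  | H : is_derive ?f ?x ?l |- context [Derive (fun y => ?f y) ?x] =>
      replace (Derive (fun y => f y) x) with l by (symmetry; exact (is_derive_unique _ _ _ H))
  end.

Ltac auto_derive_known := auto_derive; [repeat split; try (eexists; eassumption) | derive_known].

Lemma continuity_pt_of_derivable_pt_lim (f : R -> R) (x l : R) :
  derivable_pt_lim f x l -> continuity_pt f x.
Proof. intros H. exact (derivable_continuous_pt f x (exist _ l H)). Qed.

Lemma continuity_pt_of_ex_derive (f : R -> R) (x : R) : ex_derive f x -> continuity_pt f x.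
Proof.
intros Hf. apply (continuity_pt_of_derivable_pt_lim _ _ (Derive f x)).
apply is_derive_Reals, Derive_correct, Hf.
Qed.

Ltac continuity_pt_poly :=
  repeat first
    [ assumption
    | apply continuity_pt_mult | apply continuity_pt_plus | apply continuity_pt_minus
    | apply continuity_pt_opp | apply continuity_pt_const; intros ? ?; reflexivity ].

Lemma derivative_zero_const (f : R -> R) (a b : R) :
  a <= b -> (forall c, a <= c <= b -> derivable_pt_lim f c 0) -> f b = f a.
Proof.
intros Hab Hd. destruct (Req_dec a b) as [<-|]; [reflexivity|].
destruct (MVT_cor2 f (fun _ => 0) a b ltac:(lra) Hd) as [c [E _]]. lra.
Qed.

Lemma derivative_ge_increase (f f' : R -> R) (m a b : R) : a <= b ->
  (forall c, a <= c <= b -> derivable_pt_lim f c (f' c)) ->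
  (forall c, a <= c <= b -> m <= f' c) -> f a + m * (b - a) <= f b.
Proof.
intros Hab Hd Hm. destruct (Req_dec a b) as [<-|]; [lra|].
destruct (MVT_cor2 f f' a b ltac:(lra) Hd) as [c [E Hc]].
pose proof (Hm c ltac:(lra)). nra.
Qed.

Lemma derivative_pos_increase (f f' : R -> R) (a b : R) : a < b ->
  (forall c, a <= c <= b -> derivable_pt_lim f c (f' c)) ->
  (forall c, a <= c <= b -> 0 < f' c) -> f a < f b.
Proof.
intros Hab Hd Hpos. destruct (MVT_cor2 f f' a b Hab Hd) as [c [E Hc]].
pose proof (Hpos c ltac:(lra)). nra.
Qed.

Lemma nonvanishing_pos (f : R -> R) (t : R) : 0 <= t ->
  (forall c, 0 <= c <= t -> continuity_pt f c) ->
  (forall c, 0 <= c <= t -> f c <> 0) -> 0 < f 0 -> 0 < f t.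
Proof.
intros Ht Hc Hnz H0. destruct (Rlt_le_dec 0 (f t)) as [|Hle]; [assumption|].
destruct (IVT_interv (fun x => - f x) 0 t) as [z [Hz Hfz]].
- intros a Ha. apply continuity_pt_opp, Hc. lra.
- destruct (Req_dec t 0) as [->|]; lra.
- lra.
- assert (f t <> 0) by (apply Hnz; lra). lra.
- exfalso. apply (Hnz z Hz). lra.
Qed.

Lemma linear_ode_zero (w a : R -> R) (t : R) : 0 <= t ->
  (forall c, 0 <= c <= t -> continuity_pt a c) ->
  (forall c, 0 <= c <= t -> derivable_pt_lim w c (a c * w c)) ->
  w 0 = 0 -> w t = 0.
Proof.
intros Ht Ha Hw H0. destruct (Req_dec t 0) as [->|]; [exact H0|].
destruct (continuity_ab_maj a 0 t ltac:(lra) Ha) as [cM [HM _]].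
set (M := a cM) in HM.
(* [w^2 e^(-2Mc)] is nonincreasing since [a <= M]. *)
set (phi := fun c => - (w c ^ 2 * exp (- (2 * M) * c))).
assert (Hphi : forall c, 0 <= c <= t ->
  derivable_pt_lim phi c (2 * w c ^ 2 * exp (- (2 * M) * c) * (M - a c))).
{ intros c Hc. apply is_derive_Reals.
  pose proof (proj2 (is_derive_Reals _ _ _) (Hw c Hc)).
  unfold phi. auto_derive_known. ring. }
assert (Hdec := derivative_ge_increase phi _ 0 0 t Ht Hphi).
assert (Hphi_t : phi 0 <= phi t).
{ enough (phi 0 + 0 * (t - 0) <= phi t) by lra. apply Hdec. intros c Hc.
  pose proof (HM c Hc). pose proof (exp_pos (- (2 * M) * c)).
  pose proof (pow2_ge_0 (w c)). apply Rmult_le_pos; [|lra]. nra. }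
unfold phi in Hphi_t. rewrite H0 in Hphi_t. pose proof (exp_pos (- (2 * M) * t)).
pose proof (pow2_ge_0 (w t)). assert (w t ^ 2 = 0) by nra. nra.
Qed.

Lemma tends_to_pinfty_of_linear_growth (r : R -> R) (a m : R) : 0 < m ->
  (forall t, 0 <= t -> a + m * t <= r t) -> tends_to_pinfty r.
Proof.
intros Hm Hr B. exists (Rmax 0 ((B - a) / m) + 1). intros t Ht.
pose proof (Rmax_l 0 ((B - a) / m)). pose proof (Rmax_r 0 ((B - a) / m)).
pose proof (Hr t ltac:(lra)).
assert (B - a < m * t).
{ apply (Rmult_lt_reg_r (/ m)); [apply Rinv_0_lt_compat; lra|].
  replace (m * t * / m) with t by (field; lra). unfold Rdiv in *. lra. }
lra.
Qed.

Lemma tends_to_0_of_pow_mul_le (f r : R -> R) (n : nat) (C : R) : tends_to_pinfty r ->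
  (forall t, 0 <= t -> 0 <= f t /\ f t ^ n * r t <= C) -> tends_to_at_infty f 0.
Proof.
intros Hr Hf eps Heps. assert (Hen : 0 < eps ^ n) by (apply pow_lt; lra).
destruct (Hr (Rmax 0 (C / eps ^ n))) as [T HT]. exists (Rmax T 0). intros t Ht.
pose proof (Rmax_l T 0). pose proof (Rmax_r T 0).
pose proof (Rmax_l 0 (C / eps ^ n)). pose proof (Rmax_r 0 (C / eps ^ n)).
destruct (Hf t ltac:(lra)) as [Hft HC]. pose proof (HT t ltac:(lra)).
rewrite Rminus_0_r, Rabs_right by lra.
destruct (Rlt_le_dec (f t) eps) as [|Hge]; [assumption|].
assert (eps ^ n <= f t ^ n) by (apply pow_incr; lra).
assert (eps ^ n * r t <= C) by nra.
assert (r t <= C / eps ^ n) by (apply (Rmult_le_reg_l (eps ^ n)); [lra|]; field_simplify; lra).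
lra.
Qed.

Lemma tends_to_pinfty_of_pow_ge (f r : R -> R) (n : nat) (C : R) : 0 < C -> tends_to_pinfty r ->
  (forall t, 0 <= t -> 0 <= f t /\ C * r t <= f t ^ n) -> tends_to_pinfty f.
Proof.
intros HC Hr Hf B. set (B' := Rmax B 0).
destruct (Hr (B' ^ n / C)) as [T HT]. exists (Rmax T 0). intros t Ht.
pose proof (Rmax_l T 0). pose proof (Rmax_r T 0). pose proof (Rmax_l B 0). pose proof (Rmax_r B 0).
destruct (Hf t ltac:(lra)) as [Hft Hge]. assert (HrT := HT t ltac:(lra)).
destruct (Rlt_le_dec B' (f t)) as [|Hle]; [unfold B' in *; lra|].
assert (f t ^ n <= B' ^ n) by (apply pow_incr; lra).
assert (B' ^ n < C * r t) by (apply (Rmult_lt_reg_r (/ C)); [apply Rinv_0_lt_compat; lra|];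
  replace (C * r t * / C) with (r t) by (field; lra); exact HrT).
lra.
Qed.

(** * Global solutions of autonomous scalar equations *)

Section AutonomousEquation.

Variables (F : R -> R) (M : R).
Hypothesis F_cont : forall x, continuity_pt F x.
Hypothesis F_bounds : forall x, 0 < F x <= M.

(* Time needed by a solution of [s' = F s] to travel from [s0] to [s]. *)
Definition travel_time (s0 s : R) : R := RInt (fun u => / F u) s0 s.

Lemma travel_time_derive (s0 s : R) : derivable_pt_lim (travel_time s0) s (/ F s).
Proof.
assert (Hc : forall u, continuous (fun u => / F u) u).
{ intros u. apply continuity_pt_filterlim, continuity_pt_inv; [apply F_cont|].
  pose proof (F_bounds u). lra. }
apply is_derive_Reals. unfold travel_time.
apply (is_derive_RInt (fun u => / F u)) with (a := s0); [|apply Hc].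
apply filter_forall. intros b. apply (RInt_correct (V := R_CompleteNormedModule)).
apply ex_RInt_continuous. intros; apply Hc.
Qed.

Lemma travel_time_origin (s0 : R) : travel_time s0 s0 = 0.
Proof. unfold travel_time. rewrite RInt_point. reflexivity. Qed.

Lemma travel_time_lower (s0 a b : R) : a <= b ->
  travel_time s0 a + / M * (b - a) <= travel_time s0 b.
Proof.
intros Hab. apply derivative_ge_increase with (f' := fun u => / F u); [exact Hab| |].
- intros c _. apply travel_time_derive.
- intros c _. destruct (F_bounds c). apply Rinv_le_contravar; lra.
Qed.

Lemma travel_time_increasing (s0 a b : R) : a < b -> travel_time s0 a < travel_time s0 b.
Proof.
intros Hab. pose proof (travel_time_lower s0 a b ltac:(lra)).
destruct (F_bounds a). assert (0 < / M) by (apply Rinv_0_lt_compat; lra). nra.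
Qed.

Lemma travel_time_surjective (s0 t : R) : {s | travel_time s0 s = t}.
Proof.
destruct (F_bounds 0) as [_ HM0]. pose proof (F_bounds 0).
assert (HiM : 0 < / M) by (apply Rinv_0_lt_compat; lra).
set (L := M * Rabs t + 1).
assert (HL : 0 < L) by (unfold L; pose proof (Rabs_pos t); nra).
assert (HML : / M * L = Rabs t + / M) by (unfold L; field; lra).
pose proof (travel_time_lower s0 s0 (s0 + L) ltac:(lra)).
pose proof (travel_time_lower s0 (s0 - L) s0 ltac:(lra)).
pose proof (travel_time_origin s0).
pose proof (Rle_abs t). pose proof (Rle_abs (- t)). rewrite Rabs_Ropp in *.
destruct (IVT (fun s => travel_time s0 s - t) (s0 - L) (s0 + L)) as [s [_ Hs]].
- intros x. apply continuity_pt_minus; [|apply continuity_pt_const; intros ? ?; reflexivity].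
  apply (continuity_pt_of_derivable_pt_lim _ _ _ (travel_time_derive s0 x)).
- lra.
- replace (s0 - (s0 - L)) with L in * by ring. nra.
- replace (s0 + L - s0) with L in * by ring. nra.
- exists s. lra.
Qed.

Theorem autonomous_global_solution (s0 : R) :
  exists S : R -> R, S 0 = s0 /\ forall t, derivable_pt_lim S t (F (S t)).
Proof.
set (T := travel_time s0).
set (S := fun t => proj1_sig (travel_time_surjective s0 t)).
assert (TS : forall t, T (S t) = t) by (intros t; exact (proj2_sig (travel_time_surjective s0 t))).
assert (S_le : forall s t, T s <= t -> s <= S t).
{ intros s t Hst. destruct (Rle_lt_dec s (S t)) as [|Hlt]; [assumption|].
  pose proof (travel_time_increasing s0 _ _ Hlt) as HT. fold T in HT. rewrite TS in HT. lra. }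
assert (S_ge : forall s t, t <= T s -> S t <= s).
{ intros s t Hst. destruct (Rle_lt_dec (S t) s) as [|Hlt]; [assumption|].
  pose proof (travel_time_increasing s0 _ _ Hlt) as HT. fold T in HT. rewrite TS in HT. lra. }
exists S. split.
- apply Rle_antisym; [apply S_ge | apply S_le]; unfold T; rewrite travel_time_origin; lra.
- intros t.
  assert (HS : continuity_pt S t).
  { apply (continuity_pt_recip_interv T S (S t - 1) (S t + 1)); [lra | | | | |].
    - intros x y _ Hxy _. apply travel_time_increasing, Hxy.
    - intros x _ _. apply TS.
    - intros x H1 H2. split; [apply S_le | apply S_ge]; assumption.
    - intros a _. exact (continuity_pt_of_derivable_pt_lim _ _ _ (travel_time_derive s0 a)).
    - rewrite <- (TS t) at 2 3. split; apply travel_time_increasing; lra. }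
  assert (Hmono : S (t - 1) <= S t <= S (t + 1)) by (split; apply S_le; rewrite TS; lra).
  pose proof (F_bounds (S t)).
  assert (Hinv := derivable_pt_lim_recip_interv T S (t - 1) (t + 1) t
    (fun a _ => exist _ (/ F a) (travel_time_derive s0 a)) HS ltac:(lra) ltac:(lra) Hmono
    (fun x _ => TS x)).
  simpl in Hinv. replace (F (S t)) with (1 / / F (S t)) by (field; lra).
  apply Hinv. apply Rinv_neq_0_compat. lra.
Qed.

End AutonomousEquation.

Lemma tanh_bounds (u : R) : -1 < tanh u < 1.
Proof.
unfold tanh, sinh, cosh. pose proof (exp_pos u). pose proof (exp_pos (- u)).
split; apply Rmult_lt_reg_r with ((exp u + exp (- u)) / 2); try lra; field_simplify; lra.
Qed.

Lemma tanh_pos (u : R) : 0 < u -> 0 < tanh u.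
Proof.
intros Hu. unfold tanh, cosh. pose proof (sinh_lt 0 u Hu) as Hs. rewrite sinh_0 in Hs.
pose proof (exp_pos u). pose proof (exp_pos (- u)). apply Rdiv_lt_0_compat; lra.
Qed.

Lemma derivable_pt_lim_tanh (u : R) : derivable_pt_lim tanh u (1 - tanh u ^ 2).
Proof.
assert (Hc : 0 < cosh u) by (unfold cosh; pose proof (exp_pos u); pose proof (exp_pos (- u)); lra).
replace (1 - tanh u ^ 2) with ((cosh u * cosh u - sinh u * sinh u) / Rsqr (cosh u))
  by (unfold tanh, Rsqr; field; lra).
apply derivable_pt_lim_div; [apply derivable_pt_lim_sinh | apply derivable_pt_lim_cosh | lra].
Qed.

Definition artanh (v : R) : R := ln ((1 + v) / (1 - v)) / 2.

Lemma tanh_artanh (v : R) : -1 < v < 1 -> tanh (artanh v) = v.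
Proof.
intros Hv. set (s := artanh v).
assert (Hs : exp s * exp s = (1 + v) / (1 - v)).
{ rewrite <- exp_plus. replace (s + s) with (ln ((1 + v) / (1 - v))) by (unfold s, artanh; field).
  apply exp_ln, Rdiv_lt_0_compat; lra. }
unfold tanh, sinh, cosh. rewrite exp_Ropp. pose proof (exp_pos s).
replace ((exp s - / exp s) / 2 / ((exp s + / exp s) / 2))
  with ((exp s * exp s - 1) / (exp s * exp s + 1)) by (field; nra).
rewrite Hs. field. lra.
Qed.

Lemma artanh_pos (v : R) : 0 < v < 1 -> 0 < artanh v.
Proof.
intros Hv. unfold artanh.
assert (H1 : 1 < (1 + v) / (1 - v)) by (apply Rlt_div_r; lra).
pose proof (ln_increasing 1 _ ltac:(lra) H1) as Hln. rewrite ln_1 in Hln. lra.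
Qed.

(** * An explicit global solution *)

Definition speed (K v : R) : R := (3 + v ^ 4) * (1 - v ^ 4) ^ 2 / (768 * K ^ 2).

(* Substituting [v = tanh s] turns [v' = speed K v] into [s' = F s] with [F] positive
   and bounded. *)
Lemma speed_solution (K v0 : R) : 0 < K -> 0 < v0 < 1 ->
  exists V : R -> R, V 0 = v0 /\ (forall t, 0 <= t -> 0 < V t < 1) /\
    forall t, is_derive V t (speed K (V t)).
Proof.
intros HK Hv0. set (c := / (768 * K ^ 2)).
assert (Hc : 0 < c) by (apply Rinv_0_lt_compat; nra).
set (F := fun u => c * (3 + tanh u ^ 4) * (1 - tanh u ^ 4) * (1 + tanh u ^ 2)).
assert (F_bounds : forall u, 0 < F u <= 8 * c).
{ intros u. pose proof (tanh_bounds u). unfold F. set (v := tanh u) in *.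
  assert (0 <= v ^ 2 < 1) by (split; [apply pow2_ge_0 | nra]).
  assert (0 <= v ^ 4 < 1) by (replace (v ^ 4) with (v ^ 2 * v ^ 2) by ring; nra).
  assert (0 < (3 + v ^ 4) * (1 - v ^ 4) <= 4) by nra.
  replace (c * (3 + v ^ 4) * (1 - v ^ 4) * (1 + v ^ 2))
    with (c * ((3 + v ^ 4) * (1 - v ^ 4)) * (1 + v ^ 2)) by ring.
  split; [apply Rmult_lt_0_compat; [apply Rmult_lt_0_compat|]; lra|].
  replace (8 * c) with (c * 4 * 2) by ring.
  apply Rmult_le_compat; [nra | lra | apply Rmult_le_compat_l | ]; lra. }
assert (F_cont : forall u, continuity_pt F u).
{ intros u. pose proof (proj2 (is_derive_Reals _ _ _) (derivable_pt_lim_tanh u)).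
  apply continuity_pt_of_ex_derive. unfold F. auto_derive. repeat split; eexists; eassumption. }
destruct (autonomous_global_solution F (8 * c) F_cont F_bounds (artanh v0)) as [S [HS0 HS]].
exists (fun t => tanh (S t)). split; [|split].
- rewrite HS0. apply tanh_artanh. lra.
- intros t Ht. split; [|apply tanh_bounds]. apply tanh_pos.
  pose proof (artanh_pos v0 Hv0).
  assert (S 0 + 0 * (t - 0) <= S t); [|lra].
  apply derivative_ge_increase with (f' := fun t => F (S t)); [lra| |].
  + intros; apply HS.
  + intros; apply Rlt_le, F_bounds.
- intros t. apply is_derive_Reals.
  replace (speed K (tanh (S t))) with ((1 - tanh (S t) ^ 2) * F (S t))
    by (unfold F, speed, c; field; nra).
  apply (derivable_pt_lim_comp S tanh); [apply HS | apply derivable_pt_lim_tanh].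
Qed.

Lemma q_swap (x y z : R) : q x y z = q x z y.
Proof. unfold q. ring. Qed.

Definition curve_x (K v : R) : R := K * sqrt v * sqrt (1 - v ^ 4).
Definition curve_y (K v : R) : R := 4 * K * sqrt v / sqrt (1 - v ^ 4).
Definition curve_z (K D v : R) : R := D / (curve_x K v * curve_y K v ^ 2).

Ltac eliminate_square e He :=
  repeat match goal with
  | |- context [e ^ ?n] =>
     let m := eval compute in (Nat.div n 2) in
     lazymatch eval compute in (Nat.modulo n 2) with
     | O => replace (e ^ n) with ((e * e) ^ m) by ring
     | _ => replace (e ^ n) with ((e * e) ^ m * e) by ring
     end
  end; rewrite ?He.

(* With w = sqrt v and e = sqrt (1 - v^4) both sides are rational in w and e; they agree
   after reducing even powers of e through e^2 = 1 - w^8. *)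
Lemma curve_flow (K D : R) (V : R -> R) (t : R) :
  0 < K -> 0 < D -> 0 < V t < 1 -> is_derive V t (speed K (V t)) ->
  let x := curve_x K (V t) in let y := curve_y K (V t) in let z := curve_z K D (V t) in
  is_derive (fun s => curve_z K D (V s)) t (- (1 / (6 * D ^ 2)) * p x y y * z ^ 3) /\
  is_derive (fun s => curve_x K (V s)) t (- (1 / (6 * D ^ 2)) * q x y y * z ^ 2 * x) /\
  is_derive (fun s => curve_y K (V s)) t (- (1 / (6 * D ^ 2)) * q y y x * z ^ 2 * y).
Proof.
intros HK HD Hv HV x y z.
assert (Hv4 : 0 < 1 - V t ^ 4)
  by (assert (V t ^ 4 < 1) by (apply pow_lt_1_compat; [lra | lia]); lra).
assert (Hw : sqrt (V t) * sqrt (V t) = V t) by (apply sqrt_sqrt; lra).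
assert (He : sqrt (1 - V t ^ 4) * sqrt (1 - V t ^ 4) = 1 - (sqrt (V t) * sqrt (V t)) ^ 4)
  by (rewrite Hw; apply sqrt_sqrt; lra).
pose proof (sqrt_lt_R0 (V t) ltac:(lra)). pose proof (sqrt_lt_R0 _ Hv4).
unfold x, y, z, curve_z, curve_x, curve_y, p, q.
split; [|split]; auto_derive_known; set (v := V t) in *;
  replace (1 + - (v * (v * (v * (v * 1))))) with (1 - v ^ 4) by ring;
  try lra; try (apply Rgt_not_eq; repeat (apply Rmult_lt_0_compat || apply Rinv_0_lt_compat); lra);
  unfold speed; set (w := sqrt v) in *; set (e := sqrt (1 - v ^ 4)) in *; rewrite <- Hw;
  field_simplify_eq; try (repeat split; lra); eliminate_square e He; field; lra.
Qed.

Lemma curve_through (x0 y0 : R) : 0 < x0 -> 4 * x0 < y0 ->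
  exists K v0, 0 < K /\ 0 < v0 < 1 /\ curve_x K v0 = x0 /\ curve_y K v0 = y0.
Proof.
intros Hx0 Hxy. set (A := 1 - 4 * x0 / y0).
assert (HA : 0 < A < 1).
{ assert (0 < 4 * x0 / y0 < 1) by (split; [apply Rdiv_lt_0_compat | apply Rlt_div_l]; lra).
  unfold A; lra. }
set (v0 := sqrt (sqrt A)).
assert (Hv04 : v0 ^ 4 = A).
{ replace (v0 ^ 4) with ((v0 * v0) * (v0 * v0)) by ring. unfold v0.
  rewrite sqrt_sqrt by apply sqrt_pos. apply sqrt_sqrt. lra. }
assert (Hv0 : 0 < v0 < 1).
{ assert (0 < v0) by (apply sqrt_lt_R0, sqrt_lt_R0; lra).
  split; [assumption|]. destruct (Rlt_or_le v0 1) as [|Hge]; [assumption|].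
  assert (1 ^ 4 <= v0 ^ 4) by (apply pow_incr; lra). lra. }
set (w0 := sqrt v0). set (e0 := sqrt (1 - v0 ^ 4)).
assert (Hw0 : 0 < w0) by (apply sqrt_lt_R0; lra).
assert (He0 : 0 < e0) by (apply sqrt_lt_R0; lra).
assert (Hee : e0 * e0 = 4 * x0 / y0) by (unfold e0; rewrite sqrt_sqrt; unfold A in *; lra).
exists (x0 / (w0 * e0)), v0. split; [|split; [assumption|split]].
- apply Rdiv_lt_0_compat; [lra | apply Rmult_lt_0_compat; lra].
- unfold curve_x. fold w0 e0. field. lra.
- unfold curve_y. fold w0 e0.
  replace (4 * (x0 / (w0 * e0)) * w0 / e0) with (4 * x0 / (e0 * e0)) by (field; lra).
  rewrite Hee. field. lra.
Qed.

Lemma S3_solution_exists (h00 h11 h22 : R) : 0 < h00 -> 0 < h11 -> 4 * h11 < h22 ->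
  exists g0 g1 g2 g3 : R -> R, solves_S3_on_nonneg h00 h11 h22 h22 g0 g1 g2 g3.
Proof.
intros H00 H11 H22.
destruct (curve_through h11 h22 H11 H22) as [K [v0 [HK [Hv0 [Hx Hy]]]]].
set (D := deth h00 h11 h22 h22).
assert (HD : 0 < D) by (unfold D, deth; repeat apply Rmult_lt_0_compat; lra).
destruct (speed_solution K v0 HK Hv0) as [V [HV0 [HVr HV]]].
exists (fun t => curve_z K D (V t)), (fun t => curve_x K (V t)),
  (fun t => curve_y K (V t)), (fun t => curve_y K (V t)).
split; [|split; [|split; [|split]]]; rewrite ?HV0.
- unfold curve_z. rewrite Hx, Hy. unfold D, deth. field. lra.
- exact Hx.
- exact Hy.
- exact Hy.
- intros t Ht. change (beta h00 h11 h22 h22) with (1 / (6 * D ^ 2)).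
  destruct (curve_flow K D V t HK HD (HVr t Ht) (HV t)) as [Hz [Hx' Hy']].
  rewrite (q_swap (curve_y K (V t)) (curve_x K (V t))).
  repeat split; apply is_derive_Reals; assumption.
Qed.

(** * Behaviour of solutions *)

Definition qdiff (x y z : R) : R :=
  5*z^4 + 5*y*z^3 + 4*y^2*z^2 + 5*y^3*z + 5*y^4 - 3*x*z^3 - 5*x*y*z^2
  - 5*x*y^2*z - 3*x*y^3 - x^2*y*z + x^3*z + x^3*y - 3*x^4.

Lemma q_mul_sub (x y z : R) : q y z x * y - q z x y * z = (y - z) * qdiff x y z.
Proof. unfold q, qdiff. ring. Qed.

Lemma min_one_le_of_pow4 (u L : R) : 0 < u -> L <= u ^ 4 -> Rmin 1 L <= u.
Proof.
intros Hu HL. destruct (Rle_lt_dec 1 u).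
- pose proof (Rmin_l 1 L). lra.
- assert (u * u < 1) by nra. assert (u * u * u < 1) by nra.
  assert (u ^ 4 <= u) by (replace (u ^ 4) with (u * (u * u * u)) by ring; nra).
  pose proof (Rmin_r 1 L). lra.
Qed.

Lemma sub_div_le (k a b : R) : 0 <= k -> 0 < a <= b -> (a - k) / a <= (b - k) / b.
Proof.
intros Hk Hab. replace ((a - k) / a) with (1 - k / a) by (field; lra).
replace ((b - k) / b) with (1 - k / b) by (field; lra).
assert (k / b <= k / a); [|lra].
apply Rmult_le_compat_l; [lra|]. apply Rinv_le_contravar; lra.
Qed.

Section SolutionBehaviour.

Variables (h00 h11 h22 : R) (g0 g1 g2 g3 : R -> R).
Hypotheses (h00_pos : 0 < h00) (h11_pos : 0 < h11) (h22_large : 4 * h11 < h22).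
Hypothesis sol : solves_S3_on_nonneg h00 h11 h22 h22 g0 g1 g2 g3.

Local Notation D := (deth h00 h11 h22 h22).
Local Notation b := (beta h00 h11 h22 h22).
Local Notation kappa := ((h00 * h22 ^ 3 - 4 * D) * h00 ^ 3 * h22).

Lemma D_pos : 0 < D.
Proof. unfold deth. repeat apply Rmult_lt_0_compat; lra. Qed.

Lemma b_pos : 0 < b.
Proof. pose proof D_pos. unfold beta. apply Rdiv_lt_0_compat; [lra|]. nra. Qed.

Lemma S3_is_derive (t : R) : 0 <= t ->
  is_derive g0 t (- b * p (g1 t) (g2 t) (g3 t) * g0 t ^ 3) /\
  is_derive g1 t (- b * q (g1 t) (g2 t) (g3 t) * g0 t ^ 2 * g1 t) /\
  is_derive g2 t (- b * q (g2 t) (g3 t) (g1 t) * g0 t ^ 2 * g2 t) /\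
  is_derive g3 t (- b * q (g3 t) (g1 t) (g2 t) * g0 t ^ 2 * g3 t).
Proof.
intros Ht. destruct sol as [_ [_ [_ [_ Hd]]]].
destruct (Hd t Ht) as [d0 [d1 [d2 d3]]].
split; [|split; [|split]]; apply is_derive_Reals; assumption.
Qed.

Lemma S3_continuity (t : R) : 0 <= t ->
  continuity_pt g0 t /\ continuity_pt g1 t /\ continuity_pt g2 t /\ continuity_pt g3 t.
Proof.
intros Ht. destruct (S3_is_derive t Ht) as [d0 [d1 [d2 d3]]].
repeat split; apply continuity_pt_of_ex_derive; eexists; eassumption.
Qed.

Lemma g2_eq_g3 (t : R) : 0 <= t -> g2 t = g3 t.
Proof.
intros Ht. destruct sol as [_ [_ [I2 [I3 _]]]].
enough (g2 t - g3 t = 0) by lra.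
apply (linear_ode_zero (fun c => g2 c - g3 c)
  (fun c => - b * g0 c ^ 2 * qdiff (g1 c) (g2 c) (g3 c))); [exact Ht | | | lra].
- intros c Hc. destruct (S3_continuity c ltac:(lra)) as [c0 [c1 [c2 c3]]].
  unfold qdiff. simpl pow. continuity_pt_poly.
- intros c Hc. destruct (S3_is_derive c ltac:(lra)) as [d0 [d1 [d2 d3]]].
  apply is_derive_Reals. auto_derive_known.
  replace (- b * g0 c ^ 2 * qdiff (g1 c) (g2 c) (g3 c) * (g2 c - g3 c))
    with (- b * g0 c ^ 2 * ((g2 c - g3 c) * qdiff (g1 c) (g2 c) (g3 c))) by ring.
  rewrite <- q_mul_sub. ring.
Qed.

Lemma det_conserved (t : R) : 0 <= t -> g0 t * g1 t * g2 t * g3 t = D.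
Proof.
intros Ht. destruct sol as [I0 [I1 [I2 [I3 _]]]].
rewrite (derivative_zero_const (fun c => g0 c * g1 c * g2 c * g3 c) 0 t Ht).
- rewrite I0, I1, I2, I3. reflexivity.
- intros c Hc. destruct (S3_is_derive c ltac:(lra)) as [d0 [d1 [d2 d3]]].
  apply is_derive_Reals. auto_derive_known. unfold p, q. ring.
Qed.

Lemma g_pos (t : R) : 0 <= t -> 0 < g0 t /\ 0 < g1 t /\ 0 < g2 t /\ 0 < g3 t.
Proof.
intros Ht. destruct sol as [I0 [I1 [I2 [I3 _]]]].
assert (Hnz : forall c, 0 <= c <= t -> g0 c <> 0 /\ g1 c <> 0 /\ g2 c <> 0 /\ g3 c <> 0).
{ intros c Hc. pose proof (det_conserved c ltac:(lra)) as Hdet. pose proof D_pos.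
  repeat split; intros E; rewrite E in Hdet; lra. }
repeat split; apply nonvanishing_pos; try lra;
  try (intros c Hc; apply (S3_continuity c ltac:(lra)));
  intros c Hc; apply (Hnz c Hc).
Qed.

Lemma kappa_conserved (t : R) : 0 <= t ->
  (g0 t * g2 t ^ 3 - 4 * D) * g0 t ^ 3 * g2 t = kappa.
Proof.
intros Ht. destruct sol as [I0 [_ [I2 _]]].
rewrite (derivative_zero_const (fun c => (g0 c * g2 c ^ 3 - 4 * D) * g0 c ^ 3 * g2 c) 0 t Ht).
- rewrite I0, I2. reflexivity.
- intros c Hc. destruct (S3_is_derive c ltac:(lra)) as [d0 [d1 [d2 d3]]].
  apply is_derive_Reals. auto_derive_known.
  rewrite <- (det_conserved c ltac:(lra)), <- (g2_eq_g3 c ltac:(lra)). unfold p, q. ring.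
Qed.

Lemma kappa_pos : 0 < kappa.
Proof.
unfold deth.
replace ((h00 * h22 ^ 3 - 4 * (h00 * h11 * h22 * h22)) * h00 ^ 3 * h22)
  with (h00 ^ 4 * h22 ^ 3 * (h22 - 4 * h11)) by ring.
repeat apply Rmult_lt_0_compat; try apply pow_lt; lra.
Qed.

Lemma g2_gt_4g1 (t : R) : 0 <= t -> 4 * g1 t < g2 t.
Proof.
intros Ht. pose proof kappa_pos as Hk. destruct (g_pos t Ht) as [p0 [p1 [p2 _]]].
rewrite <- (kappa_conserved t Ht), <- (det_conserved t Ht), <- (g2_eq_g3 t Ht) in Hk.
replace ((g0 t * g2 t ^ 3 - 4 * (g0 t * g1 t * g2 t * g2 t)) * g0 t ^ 3 * g2 t)
  with ((g0 t ^ 4 * g2 t ^ 3) * (g2 t - 4 * g1 t)) in Hk by ring.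
assert (0 < g0 t ^ 4 * g2 t ^ 3) by (apply Rmult_lt_0_compat; apply pow_lt; lra).
nra.
Qed.

Lemma g2_increasing (s t : R) : 0 <= s -> s < t -> g2 s < g2 t.
Proof.
intros Hs Hst.
apply (derivative_pos_increase g2 (fun c => - b * q (g2 c) (g3 c) (g1 c) * g0 c ^ 2 * g2 c));
  [exact Hst | |].
- intros c Hc. apply is_derive_Reals, (S3_is_derive c ltac:(lra)).
- intros c Hc. pose proof b_pos as Hb. destruct (g_pos c ltac:(lra)) as [p0 [p1 [p2 _]]].
  pose proof (g2_gt_4g1 c ltac:(lra)). rewrite <- (g2_eq_g3 c ltac:(lra)).
  replace (- b * q (g2 c) (g2 c) (g1 c) * g0 c ^ 2 * g2 c)
    with (b * g1 c ^ 2 * (g2 c - g1 c) * (g2 c - 3 * g1 c) * g0 c ^ 2 * g2 c)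
    by (unfold q; ring).
  revert Hb. generalize b. intros b0 Hb0.
  repeat apply Rmult_lt_0_compat; try apply pow_lt; lra.
Qed.

Local Notation r0 := (h22 / h11).

Definition ratio (t : R) : R := g2 t / g1 t.

Definition ratio_slope (t : R) : R :=
  2 * b * g0 t ^ 2 * g1 t * g2 t * (g2 t - g1 t) * (g2 t - 4 * g1 t).

Lemma ratio_is_derive (t : R) : 0 <= t -> derivable_pt_lim ratio t (ratio_slope t).
Proof.
intros Ht. destruct (S3_is_derive t Ht) as [_ [d1 [d2 _]]].
destruct (g_pos t Ht) as [_ [p1 _]].
apply is_derive_Reals. unfold ratio. auto_derive_known; [lra|].
rewrite <- (g2_eq_g3 t Ht). unfold ratio_slope, q. field. lra.
Qed.

Lemma ratio_slope_pos (t : R) : 0 <= t -> 0 < ratio_slope t.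
Proof.
intros Ht. destruct (g_pos t Ht) as [p0 [p1 [p2 _]]]. pose proof (g2_gt_4g1 t Ht).
pose proof b_pos as Hb. unfold ratio_slope. revert Hb. generalize b. intros b0 Hb0.
repeat apply Rmult_lt_0_compat; try apply pow_lt; lra.
Qed.

Lemma ratio_ge_init (t : R) : 0 <= t -> r0 <= ratio t.
Proof.
intros Ht. destruct sol as [_ [I1 [I2 _]]].
enough (Hinc : ratio 0 + 0 * (t - 0) <= ratio t)
  by (unfold ratio in *; rewrite I1, I2 in Hinc; lra).
apply (derivative_ge_increase ratio ratio_slope); [exact Ht | |].
- intros c Hc. apply ratio_is_derive. lra.
- intros c Hc. apply Rlt_le, ratio_slope_pos. lra.
Qed.

Lemma r0_gt_4 : 4 < r0.
Proof. apply (Rlt_div_r 4 h22 h11); lra. Qed.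

(* Both conserved quantities enter: the fourth power of the slope is a function of the
   ratio alone. *)
Lemma ratio_slope_pow4 (t : R) : 0 <= t ->
  ratio_slope t ^ 4 * (6 ^ 4 * D ^ 4 * ratio t ^ 7)
  = 16 * kappa * (ratio t - 1) ^ 4 * (ratio t - 4) ^ 3.
Proof.
intros Ht. destruct (g_pos t Ht) as [p0 [p1 [p2 _]]].
unfold ratio_slope, ratio. rewrite <- (kappa_conserved t Ht). unfold beta.
rewrite <- (det_conserved t Ht), <- (g2_eq_g3 t Ht). field. lra.
Qed.

Lemma ratio_slope_lower : exists m, 0 < m /\ forall t, 0 <= t -> m <= ratio_slope t.
Proof.
pose proof D_pos as HD. pose proof kappa_pos as Hk. pose proof r0_gt_4 as Hr0.
set (L := 16 * kappa / (6 ^ 4 * D ^ 4) * ((r0 - 1) / r0) ^ 4 * ((r0 - 4) / r0) ^ 3).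
assert (HC : 0 < 16 * kappa / (6 ^ 4 * D ^ 4))
  by (apply Rdiv_lt_0_compat; [lra | apply Rmult_lt_0_compat; [lra | apply pow_lt; lra]]).
assert (H1 : 0 < (r0 - 1) / r0) by (apply Rdiv_lt_0_compat; lra).
assert (H4 : 0 < (r0 - 4) / r0) by (apply Rdiv_lt_0_compat; lra).
exists (Rmin 1 L). split.
- apply Rmin_pos; [lra|]. unfold L.
  apply Rmult_lt_0_compat; [apply Rmult_lt_0_compat; [exact HC|] |]; apply pow_lt; assumption.
- intros t Ht. apply min_one_le_of_pow4; [apply ratio_slope_pos, Ht|].
  pose proof (ratio_ge_init t Ht). pose proof (ratio_slope_pow4 t Ht) as E.
  set (r := ratio t) in *.
  replace (ratio_slope t ^ 4)
    with (16 * kappa / (6 ^ 4 * D ^ 4) * ((r - 1) / r) ^ 4 * ((r - 4) / r) ^ 3).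
  + unfold L. apply Rmult_le_compat; [ | apply pow_le; lra | | apply pow_incr; split; [lra|] ].
    * apply Rmult_le_pos; [lra | apply pow_le; lra].
    * apply Rmult_le_compat_l; [lra|]. apply pow_incr. split; [lra|]. apply sub_div_le; lra.
    * apply sub_div_le; lra.
  + apply (Rmult_eq_reg_r (6 ^ 4 * D ^ 4 * r ^ 7)).
    * rewrite E. field. lra.
    * apply Rgt_not_eq.
      apply Rmult_lt_0_compat; [apply Rmult_lt_0_compat; [lra|] |]; apply pow_lt; lra.
Qed.

Lemma ratio_to_pinfty : tends_to_pinfty ratio.
Proof.
destruct ratio_slope_lower as [m [Hm Hslope]].
apply (tends_to_pinfty_of_linear_growth ratio r0 m Hm). intros t Ht.
destruct sol as [_ [I1 [I2 _]]].
enough (Hinc : ratio 0 + m * (t - 0) <= ratio t)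
  by (unfold ratio in *; rewrite I1, I2 in Hinc; lra).
apply (derivative_ge_increase ratio ratio_slope); [exact Ht | |].
- intros c Hc. apply ratio_is_derive. lra.
- intros c Hc. apply Hslope. lra.
Qed.

Lemma g0_pow8 (t : R) : 0 <= t -> g0 t ^ 8 * (D ^ 4 * ratio t * (ratio t - 4) ^ 3) = kappa ^ 3.
Proof.
intros Ht. destruct (g_pos t Ht) as [p0 [p1 [p2 _]]]. unfold ratio.
rewrite <- (kappa_conserved t Ht), <- (det_conserved t Ht), <- (g2_eq_g3 t Ht). field. lra.
Qed.

Lemma g1_pow8 (t : R) : 0 <= t -> g1 t ^ 8 * kappa * ratio t ^ 5 = D ^ 4 * (ratio t - 4).
Proof.
intros Ht. destruct (g_pos t Ht) as [p0 [p1 [p2 _]]]. unfold ratio.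
rewrite <- (kappa_conserved t Ht), <- (det_conserved t Ht), <- (g2_eq_g3 t Ht). field. lra.
Qed.

Lemma g2_pow8 (t : R) : 0 <= t -> g2 t ^ 8 * kappa = D ^ 4 * ratio t ^ 3 * (ratio t - 4).
Proof.
intros Ht. destruct (g_pos t Ht) as [p0 [p1 [p2 _]]]. unfold ratio.
rewrite <- (kappa_conserved t Ht), <- (det_conserved t Ht), <- (g2_eq_g3 t Ht). field. lra.
Qed.

Lemma g0_to_0 : tends_to_at_infty g0 0.
Proof.
pose proof D_pos as HD. pose proof kappa_pos as Hk. pose proof r0_gt_4 as Hr0.
assert (HC : 0 < D ^ 4 * (r0 - 4) ^ 3) by (apply Rmult_lt_0_compat; apply pow_lt; lra).
apply (tends_to_0_of_pow_mul_le g0 ratio 8 (kappa ^ 3 / (D ^ 4 * (r0 - 4) ^ 3)) ratio_to_pinfty).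
intros t Ht. destruct (g_pos t Ht) as [p0 _]. split; [lra|].
pose proof (ratio_ge_init t Ht). pose proof (g0_pow8 t Ht) as E.
apply (Rmult_le_reg_r (D ^ 4 * (r0 - 4) ^ 3) _ _ HC).
replace (kappa ^ 3 / (D ^ 4 * (r0 - 4) ^ 3) * (D ^ 4 * (r0 - 4) ^ 3)) with (kappa ^ 3)
  by (field; lra).
rewrite <- E.
replace (g0 t ^ 8 * (D ^ 4 * ratio t * (ratio t - 4) ^ 3))
  with (g0 t ^ 8 * ratio t * D ^ 4 * (ratio t - 4) ^ 3) by ring.
replace (g0 t ^ 8 * ratio t * (D ^ 4 * (r0 - 4) ^ 3))
  with (g0 t ^ 8 * ratio t * D ^ 4 * (r0 - 4) ^ 3) by ring.
apply Rmult_le_compat_l; [|apply pow_incr; lra].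
apply Rmult_le_pos; [apply Rmult_le_pos|]; try apply pow_le; lra.
Qed.

Lemma g1_to_0 : tends_to_at_infty g1 0.
Proof.
pose proof D_pos as HD. pose proof kappa_pos as Hk. pose proof r0_gt_4 as Hr0.
apply (tends_to_0_of_pow_mul_le g1 ratio 8 (D ^ 4 / kappa) ratio_to_pinfty).
intros t Ht. destruct (g_pos t Ht) as [_ [p1 _]]. split; [lra|].
pose proof (ratio_ge_init t Ht). pose proof (g1_pow8 t Ht) as E.
set (r := ratio t) in *. set (k := kappa) in *. clearbody k.
assert (Hr4 : r <= r ^ 4).
{ replace (r ^ 4) with (r * r ^ 3) by ring.
  assert (Hr3 : 1 ^ 3 <= r ^ 3) by (apply pow_incr; lra). rewrite pow1 in Hr3. nra. }
assert (g1 t ^ 8 * k * r * r ^ 4 <= D ^ 4 * r ^ 4).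
{ replace (g1 t ^ 8 * k * r * r ^ 4) with (g1 t ^ 8 * k * r ^ 5) by ring.
  rewrite E. apply Rmult_le_compat_l; [apply pow_le; lra | lra]. }
assert (g1 t ^ 8 * k * r <= D ^ 4) by (apply (Rmult_le_reg_r (r ^ 4)); [apply pow_lt; lra | lra]).
apply (Rmult_le_reg_r k _ _ Hk). replace (D ^ 4 / k * k) with (D ^ 4) by (field; lra).
lra.
Qed.

Lemma g2_to_pinfty : tends_to_pinfty g2.
Proof.
pose proof D_pos as HD. pose proof kappa_pos as Hk. pose proof r0_gt_4 as Hr0.
assert (HC : 0 < D ^ 4 * r0 ^ 2 * (r0 - 4) / kappa)
  by (apply Rdiv_lt_0_compat; [apply Rmult_lt_0_compat; [apply Rmult_lt_0_compat|] |];
      try apply pow_lt; lra).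
apply (tends_to_pinfty_of_pow_ge g2 ratio 8 (D ^ 4 * r0 ^ 2 * (r0 - 4) / kappa) HC ratio_to_pinfty).
intros t Ht. destruct (g_pos t Ht) as [_ [_ [p2 _]]]. split; [lra|].
pose proof (ratio_ge_init t Ht). pose proof (g2_pow8 t Ht) as E.
set (r := ratio t) in *. set (k := kappa) in *. clearbody k.
apply (Rmult_le_reg_r k _ _ Hk). rewrite E.
replace (D ^ 4 * r0 ^ 2 * (r0 - 4) / k * r * k) with (D ^ 4 * r * (r0 ^ 2 * (r0 - 4)))
  by (field; lra).
replace (D ^ 4 * r ^ 3 * (r - 4)) with (D ^ 4 * r * (r ^ 2 * (r - 4))) by ring.
apply Rmult_le_compat_l; [apply Rmult_le_pos; [apply pow_le|]; lra|].
apply Rmult_le_compat; [apply pow_le | | apply pow_incr |]; lra.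
Qed.

Lemma g3_increasing (s t : R) : 0 <= s -> s < t -> g3 s < g3 t.
Proof.
intros Hs Hst. rewrite <- (g2_eq_g3 s Hs), <- (g2_eq_g3 t ltac:(lra)).
apply g2_increasing; assumption.
Qed.

Lemma g3_to_pinfty : tends_to_pinfty g3.
Proof.
intros B. destruct (g2_to_pinfty B) as [T HT]. exists (Rmax T 0). intros t Ht.
pose proof (Rmax_l T 0). pose proof (Rmax_r T 0).
rewrite <- (g2_eq_g3 t ltac:(lra)). apply HT. lra.
Qed.

End SolutionBehaviour.

Theorem theorem5p19 (h00 h11 h22 h33 : R) :
  0 < h00 -> 0 < h11 -> 0 < h22 -> 0 < h33 ->
  4 * h11 < h22 -> h22 = h33 ->
  (exists g0 g1 g2 g3 : R -> R, solves_S3_on_nonneg h00 h11 h22 h33 g0 g1 g2 g3) /\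
  (forall g0 g1 g2 g3 : R -> R,
     solves_S3_on_nonneg h00 h11 h22 h33 g0 g1 g2 g3 ->
     (forall t, 0 <= t -> g2 t = g3 t) /\
     (forall s t, 0 <= s -> s < t -> g2 s < g2 t) /\
     (forall s t, 0 <= s -> s < t -> g3 s < g3 t) /\
     tends_to_at_infty g0 0 /\
     tends_to_at_infty g1 0 /\
     tends_to_pinfty g2 /\
     tends_to_pinfty g3 /\
     (forall t, 0 <= t ->
        (g0 t * (g2 t)^3 - 4 * deth h00 h11 h22 h33) * (g0 t)^3 * g2 t
        = (h00 * h22^3 - 4 * deth h00 h11 h22 h33) * h00^3 * h22)).
Proof.
intros H00 H11 _ _ H22 <-. split.
- apply S3_solution_exists; assumption.
- intros g0 g1 g2 g3 Hsol. repeat split.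
  + exact (g2_eq_g3 _ _ _ _ _ _ _ Hsol).
  + exact (g2_increasing _ _ _ _ _ _ _ H00 H11 H22 Hsol).
  + exact (g3_increasing _ _ _ _ _ _ _ H00 H11 H22 Hsol).
  + exact (g0_to_0 _ _ _ _ _ _ _ H00 H11 H22 Hsol).
  + exact (g1_to_0 _ _ _ _ _ _ _ H00 H11 H22 Hsol).
  + exact (g2_to_pinfty _ _ _ _ _ _ _ H00 H11 H22 Hsol).
  + exact (g3_to_pinfty _ _ _ _ _ _ _ H00 H11 H22 Hsol).
  + exact (kappa_conserved _ _ _ _ _ _ _ Hsol).
Qed.
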